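(* Let $C$ be a coalgebra over a field $k$ and let $\sigma:C\otimes C\to k$ be a strong $\mathcal{D}$-map, i.e. a $k$-bilinear map with $\sum\sigma(c_{(1)}\otimes d)c_{(2)}=\sum\sigma(c_{(2)}\otimes d)c_{(1)}$ for all $c,d\in C$. Let $(M,\rho)$ be a right $C$-comodule. Then the map $$R_\sigma:M\otimes M\to M\otimes M,\qquad R_\sigma(m\otimes n)=\sum\sigma(m_{<1>}\otimes n_{<1>})\,m_{<0>}\otimes n_{<0>}$$ is a solution of the Long equation, i.e. $R_\sigma^{12}R_\sigma^{13}=R_\sigma^{13}R_\sigma^{12}$ and $R_\sigma^{12}R_\sigma^{23}=R_\sigma^{23}R_\sigma^{12}$ in $\mathrm{End}_k(M\otimes M\otimes M)$.
   Context: Sweedler notation: $\Delta(c)=\sum c_{(1)}\otimes c_{(2)}$ and $\rho(m)=\sum m_{<0>}\otimes m_{<1>}$. For $R\in\mathrm{End}_k(M\otimes M)$: $R^{12}=R\otimes I$, $R^{23}=I\otimes R$, $R^{13}=(I\otimes\tau)(R\otimes I)(I\otimes\tau)$, where $\tau(m\otimes n)=n\otimes m$. *)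

(* Tensor products are not in the library: an element of
   V (x) W is presented by a finite list of pairs (its Sweedler expression),
   and two such presentations are identified exactly when every bilinear map
   out of V x W (into any k-vector space) takes the same value on them --
   i.e. equality in the tensor product via its universal property. *)
From HB Require Import structures.
From mathcomp Require Import all_boot all_order all_algebra.
Set Implicit Arguments. Unset Strict Implicit. Unset Printing Implicit Defensive.
Import Order.TTheory GRing.Theory Num.Theory.
Local Open Scope ring_scope.

Section Tensors.
Variable k : fieldType.

Definition slinear (V : lmodType k) (f : V -> k) :=
  forall (a : k) (x y : V), f (a *: x + y) = a * f x + f y.

Definition sbilinear (V W : lmodType k) (f : V -> W -> k) :=
  (forall w, slinear (fun v => f v w)) /\ (forall v, slinear (f v)).

Definition bilin (V W U : lmodType k) (f : V -> W -> U) :=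
  (forall w, linear (fun v => f v w)) /\ (forall v, linear (f v)).

Definition trilin (V W X U : lmodType k) (f : V -> W -> X -> U) :=
  [/\ forall w x, linear (fun v => f v w x),
      forall v x, linear (fun w => f v w x) &
      forall v w, linear (f v w)].

Definition teq2 (V W : lmodType k) (s t : seq (V * W)) : Prop :=
  forall (U : lmodType k) (f : V -> W -> U), bilin f ->
    \sum_(x <- s) f x.1 x.2 = \sum_(x <- t) f x.1 x.2.

Definition teq3 (V W X : lmodType k) (s t : seq (V * W * X)) : Prop :=
  forall (U : lmodType k) (f : V -> W -> X -> U), trilin f ->
    \sum_(x <- s) f x.1.1 x.1.2 x.2 = \sum_(x <- t) f x.1.1 x.1.2 x.2.

Definition tscale1 (V W : lmodType k) (a : k) (s : seq (V * W)) :=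
  [seq (a *: x.1, x.2) | x <- s].

Definition is_coalgebra (C : lmodType k) (Delta : C -> seq (C * C))
    (eps : C -> k) : Prop :=
  [/\ (forall a c d, teq2 (Delta (a *: c + d)) (tscale1 a (Delta c) ++ Delta d)),
      slinear eps,
      (* coassociativity: (Delta (x) I) Delta = (I (x) Delta) Delta *)
      (forall c, teq3
         (flatten [seq [seq (y.1, y.2, x.2) | y <- Delta x.1] | x <- Delta c])
         (flatten [seq [seq (x.1, z.1, z.2) | z <- Delta x.2] | x <- Delta c])),
      (forall c, \sum_(x <- Delta c) eps x.1 *: x.2 = c) &
      (forall c, \sum_(x <- Delta c) eps x.2 *: x.1 = c)].

Definition is_right_comodule (C : lmodType k) (Delta : C -> seq (C * C))
    (eps : C -> k) (M : lmodType k) (rho : M -> seq (M * C)) : Prop :=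
  [/\ (forall a m n, teq2 (rho (a *: m + n)) (tscale1 a (rho m) ++ rho n)),
      (* (rho (x) I) rho = (I (x) Delta) rho *)
      (forall m, teq3
         (flatten [seq [seq (y.1, y.2, x.2) | y <- rho x.1] | x <- rho m])
         (flatten [seq [seq (x.1, z.1, z.2) | z <- Delta x.2] | x <- rho m])) &
      (forall m, \sum_(x <- rho m) eps x.2 *: x.1 = m)].

Definition strong_Dmap (C : lmodType k) (Delta : C -> seq (C * C))
    (sigma : C -> C -> k) : Prop :=
  sbilinear sigma /\
  forall c d, \sum_(x <- Delta c) sigma x.1 d *: x.2
            = \sum_(x <- Delta c) sigma x.2 d *: x.1.

Definition Rsigma (C M : lmodType k) (rho : M -> seq (M * C))
    (sigma : C -> C -> k) (m n : M) : seq (M * M) :=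
  flatten [seq [seq (sigma x.2 y.2 *: x.1, y.1) | y <- rho n] | x <- rho m].

(* R^12 = R (x) I, R^23 = I (x) R, tau23 = I (x) tau, R^13 = tau23 R^12 tau23,
   acting on (presentations of) elements of M (x) M (x) M *)
Definition op12 (M : lmodType k) (R : M -> M -> seq (M * M))
    (s : seq (M * M * M)) : seq (M * M * M) :=
  flatten [seq [seq (r.1, r.2, x.2) | r <- R x.1.1 x.1.2] | x <- s].
Definition op23 (M : lmodType k) (R : M -> M -> seq (M * M))
    (s : seq (M * M * M)) : seq (M * M * M) :=
  flatten [seq [seq (x.1.1, r.1, r.2) | r <- R x.1.2 x.2] | x <- s].
Definition tau23 (M : lmodType k) (s : seq (M * M * M)) : seq (M * M * M) :=
  [seq (x.1.1, x.2, x.1.2) | x <- s].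
Definition op13 (M : lmodType k) (R : M -> M -> seq (M * M))
    (s : seq (M * M * M)) : seq (M * M * M) :=
  tau23 (op12 R (tau23 s)).

End Tensors.

(* Pair both sides with an arbitrary trilinear map f.  Linearity and
   coassociativity of the coaction, (rho (x) I) rho = (I (x) Delta) rho, turn
   each side into a sum of terms f (m<0>) (n<0>) (p<0>), each scaled by a
   coefficient sum sigma(c(1), _) sigma(c(2), _) where c is m<1> (first
   equation) or n<1> (second).  The two sides differ only by exchanging c(1)
   and c(2), which the strong D-map identity allows once sigma(_, e), resp.
   sigma(e, _), is applied to it. *)

From HB Require Import structures.
From mathcomp Require Import all_boot all_order all_algebra.
Set Implicit Arguments. Unset Strict Implicit. Unset Printing Implicit Defensive.
Import GRing.Theory.
Local Open Scope ring_scope.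

Section LinearFunctions.
Variable k : fieldType.
Implicit Types V U : lmodType k.

Lemma linearZ_fun V U (F : V -> U) c u : linear F -> F (c *: u) = c *: F u.
Proof.
move=> linF; pose F' : {linear V -> U} := HB.pack F (GRing.isLinear.Build _ _ _ _ F linF).
exact: (linearZZ F').
Qed.

Lemma slinear_sum V (F : V -> k) (I : Type) (s : seq I) (a : I -> k) (v : I -> V) :
  slinear F -> F (\sum_(i <- s) a i *: v i) = \sum_(i <- s) a i * F (v i).
Proof.
move=> linF; pose F' : {scalar V} := HB.pack F (GRing.isLinear.Build _ _ _ _ F linF).
transitivity (\sum_(i <- s) F (a i *: v i)); first exact: (linear_sum F').
by apply: eq_bigr => i _; exact: (scalarZ F').
Qed.

Lemma linear_sum_fun V U (I : Type) (s : seq I) (F : I -> V -> U) :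
  (forall i, linear (F i)) -> linear (fun v => \sum_(i <- s) F i v).
Proof.
move=> linF a u v; rewrite scaler_sumr -big_split.
by apply: eq_bigr => i _; rewrite linF.
Qed.

Lemma linear_scale_fun V U (c : k) (F : V -> U) :
  linear F -> linear (fun v => c *: F v).
Proof. by move=> linF a u v; rewrite linF scalerDr !scalerA mulrC. Qed.

Lemma slinear_scale_fun V U (g : V -> k) (X : U) :
  slinear g -> linear (fun v => g v *: X).
Proof. by move=> ling a u v; rewrite ling scalerDl scalerA. Qed.

End LinearFunctions.

Section ComoduleSums.
Variables (k : fieldType) (C M U : lmodType k).
Variables (Delta : C -> seq (C * C)) (rho : M -> seq (M * C)).
Hypothesis rho_linear :
  forall a m n, teq2 (rho (a *: m + n)) (tscale1 a (rho m) ++ rho n).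
Hypothesis rho_coassoc : forall m, teq3
  (flatten [seq [seq (y.1, y.2, x.2) | y <- rho x.1] | x <- rho m])
  (flatten [seq [seq (x.1, z.1, z.2) | z <- Delta x.2] | x <- rho m]).

Lemma sum_coact_linear (g : M -> C -> U) :
  bilin g -> linear (fun m => \sum_(z <- rho m) g z.1 z.2).
Proof.
move=> bilg a m n /=; rewrite (rho_linear a m n bilg) big_cat big_map scaler_sumr.
by congr (_ + _); apply: eq_bigr => z _; rewrite (linearZ_fun _ _ (proj1 bilg z.2)).
Qed.

Lemma sum_coactZ (g : M -> C -> U) c m : bilin g ->
  \sum_(z <- rho (c *: m)) g z.1 z.2 = c *: \sum_(z <- rho m) g z.1 z.2.
Proof. by move=> bilg; rewrite (linearZ_fun _ _ (sum_coact_linear bilg)). Qed.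

Lemma sum_coact_coassoc (h : M -> C -> C -> U) m : trilin h ->
  \sum_(x <- rho m) \sum_(z <- rho x.1) h z.1 z.2 x.2
  = \sum_(x <- rho m) \sum_(u <- Delta x.2) h x.1 u.1 u.2.
Proof.
move=> trih; have := rho_coassoc m trih; rewrite !big_flatten !big_map.
by under eq_bigr do rewrite big_map; under [RHS]eq_bigr do rewrite big_map.
Qed.

Lemma sum_coact_scaled (a : C -> k) (g : M -> C -> U) m : slinear a -> bilin g ->
  \sum_(x <- rho m) \sum_(z <- rho (a x.2 *: x.1)) g z.1 z.2
  = \sum_(x <- rho m) \sum_(u <- Delta x.2) a u.2 *: g x.1 u.1.
Proof.
move=> lina [g1 g2].
under eq_bigr do rewrite (sum_coactZ _ _ (conj g1 g2)) scaler_sumr.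
apply: (sum_coact_coassoc (h := fun z c1 c2 => a c2 *: g z c1)).
by split=> *;
  [apply: linear_scale_fun | apply: linear_scale_fun | apply: slinear_scale_fun].
Qed.

End ComoduleSums.

Section OperatorSums.
Variables (k : fieldType) (M U : lmodType k) (R : M -> M -> seq (M * M)).
Implicit Types (s : seq (M * M * M)) (F : M * M * M -> U).

Lemma sum_op12 s F : \sum_(t <- op12 R s) F t
  = \sum_(x <- s) \sum_(r <- R x.1.1 x.1.2) F (r.1, r.2, x.2).
Proof. by rewrite big_flatten big_map; under eq_bigr do rewrite big_map. Qed.

Lemma sum_op23 s F : \sum_(t <- op23 R s) F t
  = \sum_(x <- s) \sum_(r <- R x.1.2 x.2) F (x.1.1, r.1, r.2).
Proof. by rewrite big_flatten big_map; under eq_bigr do rewrite big_map. Qed.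

Lemma sum_op13 s F : \sum_(t <- op13 R s) F t
  = \sum_(x <- s) \sum_(r <- R x.1.1 x.2) F (r.1, x.1.2, r.2).
Proof. by rewrite big_map sum_op12 big_map. Qed.

End OperatorSums.

Lemma sum_Rsigma (k : fieldType) (C M U : lmodType k) (rho : M -> seq (M * C))
    (sigma : C -> C -> k) (G : M * M -> U) m n :
  \sum_(r <- Rsigma rho sigma m n) G r
  = \sum_(x <- rho m) \sum_(y <- rho n) G (sigma x.2 y.2 *: x.1, y.1).
Proof. by rewrite big_flatten big_map; under eq_bigr do rewrite big_map. Qed.

Section LongEquationSums.
Variables (k : fieldType) (C M U : lmodType k).
Variables (Delta : C -> seq (C * C)) (rho : M -> seq (M * C)) (sigma : C -> C -> k).
Hypothesis rho_linear :
  forall a m n, teq2 (rho (a *: m + n)) (tscale1 a (rho m) ++ rho n).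
Hypothesis rho_coassoc : forall m, teq3
  (flatten [seq [seq (y.1, y.2, x.2) | y <- rho x.1] | x <- rho m])
  (flatten [seq [seq (x.1, z.1, z.2) | z <- Delta x.2] | x <- rho m]).
Hypothesis sigma_bilinear : sbilinear sigma.
Variable f : M -> M -> M -> U.
Hypothesis f_trilinear : trilin f.

Local Notation R := (Rsigma rho sigma).

Let sigma_linl w : slinear (sigma^~ w). Proof. exact: sigma_bilinear.1. Qed.
Let sigma_linr v : slinear (sigma v). Proof. exact: sigma_bilinear.2. Qed.
Let f_lin1 w x : linear (fun v => f v w x). Proof. by case: f_trilinear. Qed.
Let f_lin2 v x : linear (fun w => f v w x). Proof. by case: f_trilinear. Qed.

Lemma sum_R12R13 m n p :
  \sum_(t <- op12 R (op13 R [:: (m, n, p)])) f t.1.1 t.1.2 t.2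
  = \sum_(x <- rho m) \sum_(y <- rho n) \sum_(w <- rho p)
      (\sum_(u <- Delta x.2) sigma u.1 y.2 * sigma u.2 w.2) *: f x.1 y.1 w.1.
Proof.
rewrite sum_op12 sum_op13 big_seq1 sum_Rsigma /=.
under eq_bigr do under eq_bigr do rewrite sum_Rsigma /=.
pose g (w : M * C) z c := \sum_(y <- rho n) sigma c y.2 *: f z y.1 w.1.
have bil_g w : bilin (g w).
  by split=> *; apply: linear_sum_fun => y;
    [apply: linear_scale_fun | apply: slinear_scale_fun].
transitivity (\sum_(w <- rho p) \sum_(x <- rho m)
                \sum_(z <- rho (sigma x.2 w.2 *: x.1)) g w z.1 z.2).
  rewrite exchange_big; do 3 apply: eq_bigr => ? _.
  by apply: eq_bigr => y _; rewrite (linearZ_fun _ _ (f_lin1 _ _)).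
transitivity (\sum_(w <- rho p) \sum_(x <- rho m) \sum_(u <- Delta x.2)
                sigma u.2 w.2 *: g w x.1 u.1).
  by apply: eq_bigr => w _;
    exact: (sum_coact_scaled rho_linear rho_coassoc m (sigma_linl w.2) (bil_g w)).
rewrite [LHS]exchange_big; apply: eq_bigr => x _ /=.
under [RHS]eq_bigr do under eq_bigr do rewrite scaler_suml.
rewrite [RHS]exchange_big; apply: eq_bigr => w _.
under eq_bigr do rewrite /g scaler_sumr.
rewrite exchange_big; apply: eq_bigr => y _; apply: eq_bigr => u _.
by rewrite scalerA mulrC.
Qed.

Lemma sum_R13R12 m n p :
  \sum_(t <- op13 R (op12 R [:: (m, n, p)])) f t.1.1 t.1.2 t.2
  = \sum_(x <- rho m) \sum_(y <- rho n) \sum_(w <- rho p)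
      (\sum_(u <- Delta x.2) sigma u.2 y.2 * sigma u.1 w.2) *: f x.1 y.1 w.1.
Proof.
rewrite sum_op13 sum_op12 big_seq1 sum_Rsigma /=.
under eq_bigr do under eq_bigr do rewrite sum_Rsigma /=.
pose g (y : M * C) z c := \sum_(w <- rho p) sigma c w.2 *: f z y.1 w.1.
have bil_g y : bilin (g y).
  by split=> *; apply: linear_sum_fun => w;
    [apply: linear_scale_fun | apply: slinear_scale_fun].
transitivity (\sum_(y <- rho n) \sum_(x <- rho m)
                \sum_(z <- rho (sigma x.2 y.2 *: x.1)) g y z.1 z.2).
  rewrite exchange_big; do 3 apply: eq_bigr => ? _.
  by apply: eq_bigr => w _; rewrite (linearZ_fun _ _ (f_lin1 _ _)).
transitivity (\sum_(y <- rho n) \sum_(x <- rho m) \sum_(u <- Delta x.2)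
                sigma u.2 y.2 *: g y x.1 u.1).
  by apply: eq_bigr => y _;
    exact: (sum_coact_scaled rho_linear rho_coassoc m (sigma_linl y.2) (bil_g y)).
rewrite [LHS]exchange_big; apply: eq_bigr => x _ /=; apply: eq_bigr => y _.
under eq_bigr do rewrite /g scaler_sumr.
under [RHS]eq_bigr do rewrite scaler_suml.
rewrite exchange_big; apply: eq_bigr => w _; apply: eq_bigr => u _.
by rewrite scalerA.
Qed.

Lemma sum_R12R23 m n p :
  \sum_(t <- op12 R (op23 R [:: (m, n, p)])) f t.1.1 t.1.2 t.2
  = \sum_(y <- rho n) \sum_(w <- rho p) \sum_(x <- rho m)
      (\sum_(u <- Delta y.2) sigma x.2 u.1 * sigma u.2 w.2) *: f x.1 y.1 w.1.
Proof.
rewrite sum_op12 sum_op23 big_seq1 sum_Rsigma /=.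
under eq_bigr do under eq_bigr do rewrite sum_Rsigma /=.
pose g (w : M * C) z c := \sum_(x <- rho m) sigma x.2 c *: f x.1 z w.1.
have bil_g w : bilin (g w).
  by split=> *; apply: linear_sum_fun => x;
    [apply: linear_scale_fun | apply: slinear_scale_fun].
transitivity (\sum_(w <- rho p) \sum_(y <- rho n)
                \sum_(z <- rho (sigma y.2 w.2 *: y.1)) g w z.1 z.2).
  rewrite exchange_big; do 2 apply: eq_bigr => ? _.
  rewrite exchange_big; apply: eq_bigr => z _; apply: eq_bigr => x _.
  by rewrite (linearZ_fun _ _ (f_lin1 _ _)).
transitivity (\sum_(w <- rho p) \sum_(y <- rho n) \sum_(u <- Delta y.2)
                sigma u.2 w.2 *: g w y.1 u.1).
  by apply: eq_bigr => w _;
    exact: (sum_coact_scaled rho_linear rho_coassoc n (sigma_linl w.2) (bil_g w)).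
rewrite [LHS]exchange_big; apply: eq_bigr => y _ /=; apply: eq_bigr => w _.
under eq_bigr do rewrite /g scaler_sumr.
under [RHS]eq_bigr do rewrite scaler_suml.
rewrite exchange_big; apply: eq_bigr => x _; apply: eq_bigr => u _.
by rewrite scalerA mulrC.
Qed.

Lemma sum_R23R12 m n p :
  \sum_(t <- op23 R (op12 R [:: (m, n, p)])) f t.1.1 t.1.2 t.2
  = \sum_(y <- rho n) \sum_(w <- rho p) \sum_(x <- rho m)
      (\sum_(u <- Delta y.2) sigma x.2 u.2 * sigma u.1 w.2) *: f x.1 y.1 w.1.
Proof.
rewrite sum_op23 sum_op12 big_seq1 sum_Rsigma /=.
under eq_bigr do under eq_bigr do rewrite sum_Rsigma /=.
pose h z c1 c2 := \sum_(x <- rho m) \sum_(w <- rho p)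
                    sigma x.2 c2 *: (sigma c1 w.2 *: f x.1 z w.1).
have tri_h : trilin h.
  split=> *; do 2 apply: linear_sum_fun => ?.
  - by do 2 apply: linear_scale_fun.
  - by apply: linear_scale_fun; apply: slinear_scale_fun.
  - exact: slinear_scale_fun.
transitivity (\sum_(y <- rho n) \sum_(z <- rho y.1) h z.1 z.2 y.2).
  rewrite exchange_big; apply: eq_bigr => y _.
  rewrite exchange_big; apply: eq_bigr => z _; apply: eq_bigr => x _.
  by apply: eq_bigr => w _;
    rewrite (linearZ_fun _ _ (f_lin1 _ _)) (linearZ_fun _ _ (f_lin2 _ _)).
rewrite (sum_coact_coassoc rho_coassoc _ tri_h); apply: eq_bigr => y _ /=.
under [RHS]eq_bigr do under eq_bigr do rewrite scaler_suml.
rewrite /h exchange_big [RHS]exchange_big; apply: eq_bigr => x _.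
rewrite exchange_big; apply: eq_bigr => w _; apply: eq_bigr => u _.
by rewrite scalerA.
Qed.

End LongEquationSums.

Section StrongDmap.
Variables (k : fieldType) (C : lmodType k) (Delta : C -> seq (C * C)).
Variable sigma : C -> C -> k.
Hypothesis sigma_strong : strong_Dmap Delta sigma.

Lemma strong_Dmap_swapl c d e :
  \sum_(u <- Delta c) sigma u.1 d * sigma u.2 e
  = \sum_(u <- Delta c) sigma u.2 d * sigma u.1 e.
Proof.
case: sigma_strong => -[linl _] strong.
by have := congr1 (sigma^~ e) (strong c d); rewrite /= !(slinear_sum _ _ _ (linl e)).
Qed.

Lemma strong_Dmap_swapr c d e :
  \sum_(u <- Delta c) sigma e u.1 * sigma u.2 d
  = \sum_(u <- Delta c) sigma e u.2 * sigma u.1 d.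
Proof.
case: sigma_strong => -[_ linr] strong.
have := congr1 (sigma e) (strong c d); rewrite /= !(slinear_sum _ _ _ (linr e)) => E.
by under eq_bigr do rewrite mulrC; rewrite -E; under eq_bigr do rewrite mulrC.
Qed.

End StrongDmap.

Theorem proposition4p2 (k : fieldType) (C : lmodType k)
    (Delta : C -> seq (C * C)) (eps : C -> k) (sigma : C -> C -> k)
    (M : lmodType k) (rho : M -> seq (M * C)) :
  is_coalgebra Delta eps ->
  strong_Dmap Delta sigma ->
  is_right_comodule Delta eps rho ->
  forall m n p : M,
    teq3 (op12 (Rsigma rho sigma) (op13 (Rsigma rho sigma) [:: (m, n, p)]))
         (op13 (Rsigma rho sigma) (op12 (Rsigma rho sigma) [:: (m, n, p)]))
 /\ teq3 (op12 (Rsigma rho sigma) (op23 (Rsigma rho sigma) [:: (m, n, p)]))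
         (op23 (Rsigma rho sigma) (op12 (Rsigma rho sigma) [:: (m, n, p)])).
Proof.
move=> _ sigma_strong [rho_linear rho_coassoc _] m n p.
have [sigma_bilinear _] := sigma_strong.
split=> U f f_trilinear.
- rewrite (sum_R12R13 rho_linear rho_coassoc sigma_bilinear f_trilinear).
  rewrite (sum_R13R12 rho_linear rho_coassoc sigma_bilinear f_trilinear).
  by do 3 apply: eq_bigr => ? _; rewrite (strong_Dmap_swapl sigma_strong).
- rewrite (sum_R12R23 rho_linear rho_coassoc sigma_bilinear f_trilinear).
  rewrite (sum_R23R12 rho_coassoc sigma_bilinear f_trilinear).
  by do 3 apply: eq_bigr => ? _; rewrite (strong_Dmap_swapr sigma_strong).
Qed.
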